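(* Let $A$ be a unital $C^*$-algebra and $a\in A$. (i) If $\rho(a^*,a)=0$, then $\sigma(a)\subset\mathbb R$. (ii) If $a$ is invertible and $\rho(a^*,a^{-1})=0$, then $\sigma(a)\subseteq\{\lambda\in\mathbb C:|\lambda|=1\}$.
   Context: For $a,b\in A$ and $n\geq 0$ put $C_{a,b}^n\mathbf 1=\sum_{k=0}^n(-1)^k\binom{n}{k}a^{n-k}b^k$ (with $a^0=b^0=\mathbf 1$), and $\rho(a,b)=\limsup_{n\to\infty}\|C_{a,b}^n\mathbf 1\|^{1/n}$. *)

From Stdlib Require Import Reals List.
Open Scope R_scope.

Definition Cplx : Type := (R * R)%type.
Definition Cadd (z w : Cplx) : Cplx := (fst z + fst w, snd z + snd w).
Definition Cmul (z w : Cplx) : Cplx :=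
  (fst z * fst w - snd z * snd w, fst z * snd w + snd z * fst w).
Definition Cconj (z : Cplx) : Cplx := (fst z, - snd z).
Definition Cabs (z : Cplx) : R := sqrt (fst z ^ 2 + snd z ^ 2).
Definition RtoC (x : R) : Cplx := (x, 0).
Definition C1 : Cplx := (1, 0).

Record CstarAlg := {
  car :> Type;
  zero : car; one : car;
  add : car -> car -> car; opp : car -> car; mul : car -> car -> car;
  smul : Cplx -> car -> car; star : car -> car; norm : car -> R;
  addA : forall x y z, add x (add y z) = add (add x y) z;
  addC : forall x y, add x y = add y x;
  add0x : forall x, add zero x = x;
  addN : forall x, add x (opp x) = zero;
  mulA : forall x y z, mul x (mul y z) = mul (mul x y) z;
  mul1x : forall x, mul one x = x;
  mulx1 : forall x, mul x one = x;
  mulDl : forall x y z, mul (add x y) z = add (mul x z) (mul y z);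
  mulDr : forall x y z, mul x (add y z) = add (mul x y) (mul x z);
  smulDs : forall c d x, smul (Cadd c d) x = add (smul c x) (smul d x);
  smulDv : forall c x y, smul c (add x y) = add (smul c x) (smul c y);
  smulM : forall c d x, smul (Cmul c d) x = smul c (smul d x);
  smul1 : forall x, smul C1 x = x;
  smul_mull : forall c x y, smul c (mul x y) = mul (smul c x) y;
  smul_mulr : forall c x y, smul c (mul x y) = mul x (smul c y);
  starD : forall x y, star (add x y) = add (star x) (star y);
  starZ : forall c x, star (smul c x) = smul (Cconj c) (star x);
  starM : forall x y, star (mul x y) = mul (star y) (star x);
  starK : forall x, star (star x) = x;
  norm_ge0 : forall x, 0 <= norm x;
  norm_eq0 : forall x, norm x = 0 -> x = zero;
  norm_triangle : forall x y, norm (add x y) <= norm x + norm y;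
  normZ : forall c x, norm (smul c x) = Cabs c * norm x;
  normM : forall x y, norm (mul x y) <= norm x * norm y;
  norm1 : norm one = 1;
  cstar_id : forall x, norm (mul (star x) x) = norm x * norm x;
  complete : forall u : nat -> car,
    (forall eps, 0 < eps -> exists N, forall m n, (N <= m)%nat -> (N <= n)%nat ->
        norm (add (u m) (opp (u n))) < eps) ->
    exists l, forall eps, 0 < eps -> exists N, forall n, (N <= n)%nat ->
        norm (add (u n) (opp l)) < eps
}.

Arguments zero {_}. Arguments one {_}. Arguments add {_}. Arguments opp {_}.
Arguments mul {_}. Arguments smul {_}. Arguments star {_}. Arguments norm {_}.

Fixpoint apow {A : CstarAlg} (x : A) (n : nat) : A :=
  match n with O => one | S m => mul x (apow x m) end.

Definition Cab {A : CstarAlg} (a b : A) (n : nat) : A :=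
  fold_right add zero
    (map (fun k => smul (RtoC ((-1) ^ k * Binomial.C n k))
                        (mul (apow a (n - k)) (apow b k)))
         (seq 0 (S n))).

Definition nroot (x : R) (n : nat) : R :=
  if Rle_dec x 0 then 0 else Rpower x (/ INR n).

Definition is_limsup (u : nat -> R) (L : R) : Prop :=
  (forall eps, 0 < eps -> exists N, forall n, (N <= n)%nat -> u n <= L + eps) /\
  (forall eps, 0 < eps -> forall N, exists n, (N <= n)%nat /\ L - eps <= u n).

Definition rho_eq {A : CstarAlg} (a b : A) (L : R) : Prop :=
  is_limsup (fun n => nroot (norm (Cab a b n)) n) L.

Definition invertible {A : CstarAlg} (x : A) : Prop :=
  exists y, mul x y = one /\ mul y x = one.

Definition in_spectrum {A : CstarAlg} (a : A) (l : Cplx) : Prop :=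
  ~ invertible (add (smul l one) (opp a)).

From Pilot Require Import Defs.
From Stdlib Require Import Reals Lra Lia Psatz List Classical.
From Coquelicot Require Complex Rcomplements.
Open Scope R_scope.

(* Let [mu] be an approximate eigenvalue of [a], with unit approximate
   eigenvectors [z].  Then [z* a* ~ conj mu z*], [a z ~ mu z] and, when [a] is
   invertible, [a^-1 z ~ mu^-1 z]; expanding [C^n] binomially, the compressions
   [z* C^n z] approximate [(conj mu - gamma)^n z* z] with [gamma = mu], resp.
   [mu^-1], so [rho(a*, c) >= |conj mu - gamma|] for [c = a], resp. [a^-1].
   Boundary points of the spectrum are approximate eigenvalues, and moving a
   spectral point along a suitable segment into the resolvent set yields a
   boundary point that is still off the real axis, resp. off the unit circle. *)

Definition C0 : Cplx := (0, 0).
Definition Copp (z : Cplx) : Cplx := (- fst z, - snd z).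
Definition Csub (z w : Cplx) : Cplx := Cadd z (Copp w).

Lemma Cplx_ring : ring_theory C0 Defs.C1 Cadd Cmul Csub Copp (@eq Cplx).
Proof.
  constructor; intros; repeat match goal with z : Cplx |- _ => destruct z end;
  unfold Csub, Cadd, Cmul, Copp, C0, Defs.C1; simpl; f_equal; ring.
Qed.
Add Ring Cplx_ring : Cplx_ring.

Fixpoint Cpow (z : Cplx) (n : nat) : Cplx :=
  match n with O => Defs.C1 | S m => Cmul z (Cpow z m) end.

Lemma Cabs_ge0 z : 0 <= Cabs z.
Proof. exact (Complex.Cmod_ge_0 z). Qed.

Lemma Cabs_mul z w : Cabs (Cmul z w) = Cabs z * Cabs w.
Proof. exact (Complex.Cmod_mult z w). Qed.

Lemma Cabs_RtoC r : Cabs (RtoC r) = Rabs r.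
Proof. exact (Complex.Cmod_R r). Qed.

Lemma Cabs_opp z : Cabs (Copp z) = Cabs z.
Proof. exact (Complex.Cmod_opp z). Qed.

Lemma Cabs_gt0 z : z <> C0 <-> 0 < Cabs z.
Proof. exact (Complex.Cmod_gt_0 z). Qed.

Lemma Cabs_le0 z : Cabs z <= 0 -> z = C0.
Proof. intro H. exact (Complex.Cmod_eq_0 z (Rle_antisym _ _ H (Cabs_ge0 z))). Qed.

Lemma Cabs_inv z : z <> C0 -> Cabs (Complex.Cinv z) = / Cabs z.
Proof. exact (Complex.Cmod_inv z). Qed.

Lemma Cabs_pow z n : Cabs (Cpow z n) = Cabs z ^ n.
Proof.
  induction n; simpl.
  - exact Complex.Cmod_1.
  - rewrite Cabs_mul, IHn; ring.
Qed.

Lemma Rabs_snd_le_Cabs z : Rabs (snd z) <= Cabs z.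
Proof.
  destruct z as [p q]; unfold Cabs; simpl.
  rewrite <- sqrt_Rsqr_abs. apply sqrt_le_1_alt. unfold Rsqr. nra.
Qed.

Lemma Cabs_eq1_of_conj_inv z : z <> C0 -> Cconj z = Complex.Cinv z -> Cabs z = 1.
Proof.
  intros Hz Hconj.
  assert (Hsq : RtoC (Cabs z ^ 2) = Defs.C1).
  { rewrite (Complex.Cmod2_conj z : RtoC (Cabs z ^ 2) = Cmul z (Cconj z)), Hconj.
    exact (Complex.Cinv_r z Hz). }
  injection Hsq as Hsq. pose proof (Cabs_ge0 z). nra.
Qed.

Lemma Cconj_pow z n : Cconj (Cpow z n) = Cpow (Cconj z) n.
Proof.
  induction n; simpl.
  - unfold Cconj, Defs.C1; simpl; f_equal; ring.
  - rewrite <- IHn. destruct z, (Cpow (r, r0) n); unfold Cconj, Cmul; simpl; f_equal; ring.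
Qed.

Definition Cline (w v : Cplx) (t : R) : Cplx := Cadd w (Cmul (RtoC t) v).

Lemma Cabs_Cline_sub w v t s :
  Cabs (Csub (Cline w v t) (Cline w v s)) = Rabs (t - s) * Cabs v.
Proof.
  replace (Csub (Cline w v t) (Cline w v s)) with (Cmul (RtoC (t - s)) v).
  - rewrite Cabs_mul, Cabs_RtoC; reflexivity.
  - destruct w, v; unfold Csub, Cline, Cmul, Cadd, Copp, RtoC; simpl; f_equal; ring.
Qed.

Arguments addA {_}. Arguments addC {_}. Arguments add0x {_}. Arguments addN {_}.
Arguments mulA {_}. Arguments mul1x {_}. Arguments mulx1 {_}.
Arguments mulDl {_}. Arguments mulDr {_}.
Arguments smulDs {_}. Arguments smulDv {_}. Arguments smulM {_}. Arguments smul1 {_}.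
Arguments smul_mull {_}. Arguments smul_mulr {_}.
Arguments starD {_}. Arguments starZ {_}. Arguments starM {_}. Arguments starK {_}.
Arguments norm_ge0 {_}. Arguments norm_eq0 {_}. Arguments norm_triangle {_}.
Arguments normZ {_}. Arguments normM {_}. Arguments norm1 {_}.
Arguments cstar_id {_}. Arguments complete {_}.

Notation sub x y := (add x (opp y)).

Section Algebra.

Context {A : CstarAlg}.
Implicit Types x y z u w : A.

Lemma addx0 x : add x zero = x.
Proof. rewrite addC; apply add0x. Qed.

Lemma addNx x : add (opp x) x = zero.
Proof. rewrite addC; apply addN. Qed.

Lemma addKl x y : add (opp x) (add x y) = y.
Proof. rewrite addA, addNx; apply add0x. Qed.

Lemma addKr x y : add x (add (opp x) y) = y.
Proof. rewrite addA, addN; apply add0x. Qed.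

Lemma add_cancel x y y' : add x y = add x y' -> y = y'.
Proof. intro H. rewrite <- (addKl x y), <- (addKl x y'), H; reflexivity. Qed.

Lemma add_idem x : add x x = x -> x = zero.
Proof. intro H. apply (add_cancel x). rewrite H, addx0; reflexivity. Qed.

Lemma opp_uniq x y : add x y = zero -> y = opp x.
Proof. intro H. apply (add_cancel x). rewrite H, addN; reflexivity. Qed.

Lemma oppK x : opp (opp x) = x.
Proof. symmetry; apply opp_uniq, addNx. Qed.

Lemma addCA x y w : add x (add y w) = add y (add x w).
Proof. rewrite !addA, (addC x y); reflexivity. Qed.

Lemma addAC x y w : add (add x y) w = add (add x w) y.
Proof. rewrite <- !addA, (addC y w); reflexivity. Qed.

Lemma opp_add x y : opp (add x y) = add (opp x) (opp y).
Proof.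
  symmetry; apply opp_uniq.
  rewrite <- addA, (addCA y), addN, addx0, addN; reflexivity.
Qed.

Lemma sub_eq0 x y : sub x y = zero -> x = y.
Proof. intro H. rewrite <- (oppK y). apply opp_uniq. rewrite addC; exact H. Qed.

Lemma subKK x y w : add (sub x y) (sub y w) = sub x w.
Proof. rewrite <- addA, (addKl y); reflexivity. Qed.

Lemma sub_subl x y : sub (sub x y) x = opp y.
Proof. rewrite addAC, addN, add0x; reflexivity. Qed.

Lemma sub_sub_sub x y w : sub (sub x y) (sub x w) = sub w y.
Proof. rewrite opp_add, oppK, addAC, addKr; reflexivity. Qed.

Lemma mul0x x : mul zero x = zero.
Proof. apply add_idem. rewrite <- mulDl, add0x; reflexivity. Qed.

Lemma mulx0 x : mul x zero = zero.
Proof. apply add_idem. rewrite <- mulDr, add0x; reflexivity. Qed.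

Lemma mul_oppl x y : mul (opp x) y = opp (mul x y).
Proof. apply opp_uniq. rewrite <- mulDl, addN, mul0x; reflexivity. Qed.

Lemma mul_oppr x y : mul x (opp y) = opp (mul x y).
Proof. apply opp_uniq. rewrite <- mulDr, addN, mulx0; reflexivity. Qed.

Lemma mul_subl x y w : mul (sub x y) w = sub (mul x w) (mul y w).
Proof. rewrite mulDl, mul_oppl; reflexivity. Qed.

Lemma mul_subr x y w : mul x (sub y w) = sub (mul x y) (mul x w).
Proof. rewrite mulDr, mul_oppr; reflexivity. Qed.

Lemma smul0 x : smul C0 x = zero.
Proof. apply add_idem. rewrite <- smulDs. f_equal. unfold C0, Cadd; simpl; f_equal; ring. Qed.

Lemma smulx0 c : smul c (@zero A) = zero.
Proof. apply add_idem. rewrite <- smulDv, add0x; reflexivity. Qed.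

Lemma smul_oppc c x : smul (Copp c) x = opp (smul c x).
Proof.
  apply opp_uniq. rewrite <- smulDs.
  replace (Cadd c (Copp c)) with C0 by ring. apply smul0.
Qed.

Lemma smul_opp c x : smul c (opp x) = opp (smul c x).
Proof. apply opp_uniq. rewrite <- smulDv, addN. apply smulx0. Qed.

Lemma smul_sub c x y : smul c (sub x y) = sub (smul c x) (smul c y).
Proof. rewrite smulDv, smul_opp; reflexivity. Qed.

Lemma smul_subc c d x : smul (Csub c d) x = sub (smul c x) (smul d x).
Proof. unfold Csub. rewrite smulDs, smul_oppc; reflexivity. Qed.

Lemma opp_smul x : opp x = smul (Copp Defs.C1) x.
Proof. rewrite smul_oppc, smul1; reflexivity. Qed.

Lemma norm_zero : norm (@zero A) = 0.
Proof.
  rewrite <- (smul0 zero), normZ.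
  change (Cabs C0) with (Cabs (RtoC 0)). rewrite Cabs_RtoC, Rabs_R0; ring.
Qed.

Lemma norm_opp x : norm (opp x) = norm x.
Proof. rewrite opp_smul, normZ, Cabs_opp. rewrite (Complex.Cmod_1 : Cabs Defs.C1 = 1); ring. Qed.

Lemma norm_sub_sym x y : norm (sub x y) = norm (sub y x).
Proof. rewrite <- norm_opp, opp_add, oppK, addC; reflexivity. Qed.

Lemma norm_sub_tri x y w : norm (sub x w) <= norm (sub x y) + norm (sub y w).
Proof. rewrite <- (subKK x y w). apply norm_triangle. Qed.

Lemma norm_le_sub x y : norm y <= norm x + norm (sub x y).
Proof.
  rewrite <- (addKr x y) at 1. rewrite <- (norm_opp (sub x y)), opp_add, oppK.
  apply norm_triangle.
Qed.

Lemma norm_smul1 c : norm (smul c (@one A)) = Cabs c.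
Proof. rewrite normZ, norm1; ring. Qed.

Lemma star_one : star (@one A) = one.
Proof.
  transitivity (star (mul (star (@one A)) one)).
  - rewrite starM, starK, mulx1; reflexivity.
  - rewrite mulx1, starK; reflexivity.
Qed.

Lemma star_opp x : star (opp x) = opp (star x).
Proof.
  rewrite !opp_smul, starZ. f_equal. unfold Cconj, Copp, Defs.C1; simpl; f_equal; ring.
Qed.

Lemma star_sub x y : star (sub x y) = sub (star x) (star y).
Proof. rewrite starD, star_opp; reflexivity. Qed.

Lemma norm_star_le x : norm x <= norm (star x).
Proof.
  destruct (Req_dec (norm x) 0) as [H|H]; [rewrite H; apply norm_ge0|].
  pose proof (norm_ge0 x). pose proof (norm_ge0 (star x)).
  assert (norm x * norm x <= norm (star x) * norm x) by (rewrite <- cstar_id; apply normM).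
  nra.
Qed.

Lemma norm_star x : norm (star x) = norm x.
Proof.
  apply Rle_antisym; [rewrite <- (starK x) at 2|]; apply norm_star_le.
Qed.

Lemma apow_r x n : apow x (S n) = mul (apow x n) x.
Proof.
  induction n; simpl.
  - rewrite mul1x, mulx1; reflexivity.
  - simpl in IHn. rewrite <- mulA, <- IHn; reflexivity.
Qed.

Lemma norm_apow x n : norm (apow x n) <= norm x ^ n.
Proof.
  induction n; simpl; [rewrite norm1; lra|].
  eapply Rle_trans; [apply normM|]. apply Rmult_le_compat_l; [apply norm_ge0|exact IHn].
Qed.

Lemma star_apow x n : apow (star x) n = star (apow x n).
Proof.
  induction n; simpl; [symmetry; apply star_one|].
  rewrite IHn, <- starM, <- apow_r; reflexivity.
Qed.

End Algebra.

(** * Neumann series *)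

Section Neumann.

Context {A : CstarAlg}.
Implicit Types x y u : A.

Definition converges (s : nat -> A) (l : A) : Prop :=
  forall eps, 0 < eps -> exists N, forall n, (N <= n)%nat -> norm (sub (s n) l) < eps.

Lemma eq_of_norm_sub_lt x y : (forall eps, 0 < eps -> norm (sub x y) < eps) -> x = y.
Proof.
  intro H. apply sub_eq0, norm_eq0.
  destruct (norm_ge0 (sub x y)) as [Hp|Hp]; [specialize (H _ Hp); lra|auto].
Qed.

Lemma converges_unique s l l' : converges s l -> converges s l' -> l = l'.
Proof.
  intros Hl Hl'. apply eq_of_norm_sub_lt. intros eps He.
  destruct (Hl (eps / 2)) as [N1 H1]; [lra|]. destruct (Hl' (eps / 2)) as [N2 H2]; [lra|].
  specialize (H1 _ (Nat.le_max_l N1 N2)); specialize (H2 _ (Nat.le_max_r N1 N2)).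
  eapply Rle_lt_trans; [apply (norm_sub_tri _ (s (Nat.max N1 N2)))|].
  rewrite norm_sub_sym. lra.
Qed.

Lemma converges_ext s s' l : (forall n, s n = s' n) -> converges s l -> converges s' l.
Proof. intros E H eps He. destruct (H eps He) as [N HN]. exists N; intro n; rewrite <- E; auto. Qed.

Lemma converges_mull x s l : converges s l -> converges (fun n => mul x (s n)) (mul x l).
Proof.
  intros H eps He. pose proof (norm_ge0 x).
  destruct (H (eps / (norm x + 1))) as [N HN]; [apply Rdiv_lt_0_compat; lra|].
  exists N. intros n Hn. specialize (HN n Hn).
  assert (Heps : eps / (norm x + 1) * (norm x + 1) = eps) by (field; lra).
  pose proof (norm_ge0 (sub (s n) l)).
  rewrite <- mul_subr. eapply Rle_lt_trans; [apply normM|]. nra.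
Qed.

Lemma converges_mulr x s l : converges s l -> converges (fun n => mul (s n) x) (mul l x).
Proof.
  intros H eps He. pose proof (norm_ge0 x).
  destruct (H (eps / (norm x + 1))) as [N HN]; [apply Rdiv_lt_0_compat; lra|].
  exists N. intros n Hn. specialize (HN n Hn).
  assert (Heps : eps / (norm x + 1) * (norm x + 1) = eps) by (field; lra).
  pose proof (norm_ge0 (sub (s n) l)).
  rewrite <- mul_subl. eapply Rle_lt_trans; [apply normM|]. nra.
Qed.

Lemma pow_lt_eventually r : 0 <= r < 1 ->
  forall eps, 0 < eps -> exists N, forall n, (N <= n)%nat -> r ^ n < eps.
Proof.
  intros Hr eps He.
  destruct (pow_lt_1_zero r) with eps as [N HN]; [rewrite Rabs_right; lra|exact He|].
  exists N; intros n Hn. specialize (HN n Hn).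
  rewrite Rabs_right in HN; [exact HN|apply Rle_ge, pow_le; lra].
Qed.

Lemma one_sub_apow_converges u : norm u < 1 -> converges (fun n => sub one (apow u n)) one.
Proof.
  intros Hu eps He. pose proof (norm_ge0 u).
  destruct (pow_lt_eventually (norm u)) with eps as [N HN]; [lra|exact He|].
  exists N; intros n Hn. rewrite sub_subl, norm_opp.
  eapply Rle_lt_trans; [apply norm_apow|]. auto.
Qed.

Fixpoint geom_sum u (n : nat) : A :=
  match n with O => zero | S m => add (geom_sum u m) (apow u m) end.

Lemma geom_sum_mull u n : mul (sub one u) (geom_sum u n) = sub one (apow u n).
Proof.
  induction n; simpl; [rewrite mulx0, addN; reflexivity|].
  rewrite mulDr, IHn, mul_subl, mul1x. apply subKK.
Qed.

Lemma geom_sum_mulr u n : mul (geom_sum u n) (sub one u) = sub one (apow u n).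
Proof.
  induction n; simpl geom_sum; [rewrite mul0x, addN; reflexivity|].
  rewrite mulDl, IHn, mul_subr, mulx1, <- apow_r. apply subKK.
Qed.

Lemma geom_sum_tail u n d : norm u < 1 ->
  norm (sub (geom_sum u (d + n)) (geom_sum u n))
  <= norm u ^ n * (1 - norm u ^ d) / (1 - norm u).
Proof.
  intro Hu. pose proof (norm_ge0 u).
  induction d; simpl.
  - rewrite addN, norm_zero. unfold Rdiv. rewrite Rminus_diag, Rmult_0_r, Rmult_0_l; lra.
  - rewrite addAC. eapply Rle_trans; [apply norm_triangle|].
    pose proof (norm_apow u (d + n)). rewrite pow_add in H0.
    apply Rle_trans with
      (norm u ^ n * (1 - norm u ^ d) / (1 - norm u) + norm u ^ d * norm u ^ n); [lra|].
    right. field. lra.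
Qed.

Lemma geom_sum_converges u : norm u < 1 -> exists l, converges (geom_sum u) l.
Proof.
  intro Hu. pose proof (norm_ge0 u). apply complete.
  assert (Hcauchy : forall eps, 0 < eps -> exists N, forall m n, (N <= n)%nat -> (n <= m)%nat ->
            norm (sub (geom_sum u m) (geom_sum u n)) < eps).
  { intros eps He.
    destruct (pow_lt_eventually (norm u)) with (eps * (1 - norm u)) as [N HN]; [lra|nra|].
    exists N. intros m n Hn Hnm. replace m with ((m - n) + n)%nat by lia.
    eapply Rle_lt_trans; [apply geom_sum_tail; exact Hu|].
    specialize (HN n Hn). pose proof (pow_le (norm u) (m - n) H).
    pose proof (pow_le (norm u) n H).
    apply Rmult_lt_reg_r with (1 - norm u); [lra|]. unfold Rdiv.
    rewrite Rmult_assoc, Rinv_l by lra. nra. }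
  intros eps He. destruct (Hcauchy eps He) as [N HN]. exists N. intros m n Hm Hn.
  destruct (Nat.le_ge_cases n m); [|rewrite norm_sub_sym]; apply HN; auto.
Qed.

Lemma invertible_one_sub u : norm u < 1 -> invertible (sub one u).
Proof.
  intro Hu. destruct (geom_sum_converges u Hu) as [l Hl].
  exists l; split.
  - apply (converges_unique (fun n => mul (sub one u) (geom_sum u n))).
    + apply converges_mull, Hl.
    + apply (converges_ext (fun n => sub one (apow u n))); [intro n; symmetry; apply geom_sum_mull|].
      apply one_sub_apow_converges, Hu.
  - apply (converges_unique (fun n => mul (geom_sum u n) (sub one u))).
    + apply converges_mulr, Hl.
    + apply (converges_ext (fun n => sub one (apow u n))); [intro n; symmetry; apply geom_sum_mulr|].
      apply one_sub_apow_converges, Hu.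
Qed.

End Neumann.

(** * The resolvent set is open *)

Section Resolvent.

Context {A : CstarAlg}.
Implicit Types a x y d z : A.

Lemma invertible_mul x y : invertible x -> invertible y -> invertible (mul x y).
Proof.
  intros [x' [H1 H2]] [y' [H3 H4]]. exists (mul y' x'); split.
  - rewrite <- mulA, (mulA y), H3, mul1x; auto.
  - rewrite <- mulA, (mulA x'), H2, mul1x; auto.
Qed.

Lemma invertible_sub x y d : mul x y = one -> mul y x = one ->
  norm d * norm y < 1 -> invertible (sub x d).
Proof.
  intros H1 H2 H3.
  replace (sub x d) with (mul x (sub one (mul y d))).
  - apply invertible_mul; [exists y; auto|]. apply invertible_one_sub.
    eapply Rle_lt_trans; [apply normM|]. lra.
  - rewrite mul_subr, mulx1, mulA, H1, mul1x; reflexivity.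
Qed.

Definition resolvent a (m : Cplx) : Prop := invertible (sub (smul m one) a).

Lemma resolvent_perturb a m n y :
  mul (sub (smul m one) a) y = one -> mul y (sub (smul m one) a) = one ->
  Cabs (Csub m n) * norm y < 1 -> resolvent a n.
Proof.
  intros H1 H2 H3. unfold resolvent.
  replace (sub (smul n one) a) with (sub (sub (smul m one) a) (smul (Csub m n) one))
    by (rewrite smul_subc; apply sub_sub_sub).
  eapply invertible_sub; eauto. rewrite norm_smul1; exact H3.
Qed.

Lemma resolvent_dist a m n y :
  mul (sub (smul m one) a) y = one -> mul y (sub (smul m one) a) = one ->
  ~ resolvent a n -> 1 <= Cabs (Csub m n) * norm y.
Proof. intros H1 H2 Hn. apply Rnot_lt_le. intro H. exact (Hn (resolvent_perturb a m n y H1 H2 H)). Qed.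

Lemma resolvent_large a m : norm a < Cabs m -> resolvent a m.
Proof.
  intro H. pose proof (norm_ge0 a).
  assert (Hm : m <> C0) by (apply Cabs_gt0; lra).
  assert (Hscal : forall c c', mul (smul c (@one A)) (smul c' one) = smul (Cmul c c') one)
    by (intros; rewrite <- smul_mull, mul1x, smulM; reflexivity).
  apply invertible_sub with (y := smul (Complex.Cinv m) one).
  - rewrite Hscal, (Complex.Cinv_r m Hm : Cmul m (Complex.Cinv m) = Defs.C1); apply smul1.
  - rewrite Hscal, (Complex.Cinv_l m Hm : Cmul (Complex.Cinv m) m = Defs.C1); apply smul1.
  - pose proof (proj1 (Cabs_gt0 m) Hm).
    rewrite norm_smul1, Cabs_inv by exact Hm.
    apply (Rmult_lt_reg_r (Cabs m)); [lra|].
    rewrite Rmult_assoc, Rinv_l, Rmult_1_r, Rmult_1_l; lra.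
Qed.

Lemma resolvent0 a ainv : mul a ainv = one -> mul ainv a = one -> resolvent a C0.
Proof.
  intros H1 H2. unfold resolvent. rewrite smul0, add0x. exists (opp ainv).
  rewrite mul_oppl, mul_oppr, oppK, mul_oppl, mul_oppr, oppK; auto.
Qed.

End Resolvent.

(** * Boundary points of the spectrum are approximate eigenvalues *)

Section Boundary.

Context {A : CstarAlg}.
Implicit Types a z : A.

Definition approx_eigenvalue a (mu : Cplx) : Prop :=
  forall d, 0 < d -> exists z, norm z = 1 /\ norm (sub (mul a z) (smul mu z)) <= d.

(* If [y] inverts [l - a] and [mu] is spectral, then [|l - mu| |y| >= 1], so
   [z := y / |y|] satisfies [|(a - mu) z| <= |l - mu| + 1 / |y| <= 2 |l - mu|]. *)
Lemma approx_eigenvalue_of_limit a mu : ~ resolvent a mu ->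
  (forall h, 0 < h -> exists l, resolvent a l /\ Cabs (Csub l mu) <= h) ->
  approx_eigenvalue a mu.
Proof.
  intros Hmu Hlim d Hd.
  destruct (Hlim (d / 2)) as [l [[y [Hy1 Hy2]] Hl]]; [lra|].
  pose proof (resolvent_dist a l mu y Hy1 Hy2 Hmu) as Hdist.
  pose proof (Cabs_ge0 (Csub l mu)).
  assert (Hy : 0 < norm y).
  { destruct (norm_ge0 y) as [|E]; [auto|]. rewrite <- E in Hdist. lra. }
  assert (Hinv : / norm y <= Cabs (Csub l mu)).
  { apply (Rmult_le_reg_r (norm y)); [exact Hy|]. rewrite Rinv_l; lra. }
  set (z := smul (RtoC (/ norm y)) y).
  assert (Hz : norm z = 1).
  { unfold z. rewrite normZ, Cabs_RtoC, Rabs_right; [field; lra|].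
    left; apply Rinv_0_lt_compat, Hy. }
  exists z. split; [exact Hz|].
  replace (sub (mul a z) (smul mu z))
    with (sub (smul (Csub l mu) z) (smul (RtoC (/ norm y)) (@one A))).
  - eapply Rle_trans; [apply norm_triangle|].
    rewrite norm_opp, !normZ, Hz, norm1, Cabs_RtoC, Rabs_right
      by (left; apply Rinv_0_lt_compat, Hy).
    lra.
  - rewrite <- Hy1, smul_mulr. fold z.
    rewrite mul_subl, <- smul_mull, mul1x, smul_subc. apply sub_sub_sub.
Qed.

Lemma spectrum_line_boundary a w v t1 T : t1 <= T ->
  ~ resolvent a (Cline w v t1) -> resolvent a (Cline w v T) ->
  exists t0, t1 <= t0 < T /\ ~ resolvent a (Cline w v t0) /\
    forall t, t0 < t <= T -> resolvent a (Cline w v t).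
Proof.
  intros HT H1 HTr.
  set (E := fun t => t1 <= t <= T /\ ~ resolvent a (Cline w v t)).
  destruct (completeness E) as [m [Hub Hlub]].
  - exists T. intros t [Ht _]. lra.
  - exists t1. split; [lra|exact H1].
  - assert (Ht1m : t1 <= m) by (apply Hub; split; [lra|exact H1]).
    assert (HmT : m <= T) by (apply Hlub; intros t [Ht _]; lra).
    assert (Hm : ~ resolvent a (Cline w v m)).
    { intros [y [Hy1 Hy2]].
      set (K := Cabs v * norm y).
      (* spectral points stay at distance [>= 1 / |y|] from [Cline w v m] *)
      assert (Hfar : forall s, E s -> 1 <= (m - s) * K).
      { intros s Hs. pose proof (resolvent_dist _ _ _ y Hy1 Hy2 (proj2 Hs)) as Hd.
        assert (s <= m) by (apply Hub; exact Hs).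
        rewrite Cabs_Cline_sub, Rabs_right in Hd by lra. unfold K; lra. }
      assert (HK : 0 < K).
      { pose proof (Hfar t1 (conj (conj (Rle_refl t1) HT) H1)).
        pose proof (Cabs_ge0 v). pose proof (norm_ge0 y). unfold K in *. nra. }
      assert (m <= m - / K); [|pose proof (Rinv_0_lt_compat K HK); lra].
      apply Hlub. intros s Hs. specialize (Hfar s Hs).
      assert (/ K <= m - s); [|lra].
      apply (Rmult_le_reg_r K); [exact HK|]. rewrite Rinv_l; lra. }
    exists m. split; [split; [exact Ht1m|]|split; [exact Hm|]].
    + destruct (Rle_lt_or_eq_dec m T HmT) as [|Hmt]; [auto|subst m; contradiction].
    + intros t Ht. apply NNPP. intro Hn.
      assert (t <= m) by (apply Hub; split; [lra|exact Hn]). lra.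
Qed.

Lemma approx_eigenvalue_on_line a w v t1 T : t1 <= T ->
  ~ resolvent a (Cline w v t1) -> resolvent a (Cline w v T) ->
  exists t0, t1 <= t0 < T /\ ~ resolvent a (Cline w v t0) /\
    approx_eigenvalue a (Cline w v t0).
Proof.
  intros HT H1 HTr.
  destruct (spectrum_line_boundary a w v t1 T HT H1 HTr) as [t0 [Ht0 [Hsp Hres]]].
  exists t0. split; [exact Ht0|split; [exact Hsp|]].
  apply approx_eigenvalue_of_limit; [exact Hsp|]. intros h Hh.
  pose proof (Cabs_ge0 v).
  set (r := Rmin (T - t0) (h / (Cabs v + 1))).
  assert (Hr0 : 0 < r) by (apply Rmin_pos; [lra|apply Rdiv_lt_0_compat; lra]).
  assert (HrT : r <= T - t0) by apply Rmin_l.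
  assert (Hrh : r <= h / (Cabs v + 1)) by apply Rmin_r.
  assert (Hh1 : h / (Cabs v + 1) * (Cabs v + 1) = h) by (field; lra).
  exists (Cline w v (t0 + r)). split.
  - apply Hres. lra.
  - rewrite Cabs_Cline_sub. replace (t0 + r - t0) with r by ring.
    rewrite Rabs_right by lra. nra.
Qed.

End Boundary.

Definition csum (f : nat -> Cplx) (n : nat) : Cplx := fold_right Cadd C0 (map f (seq 0 n)).

Lemma csum_last f n : csum f (S n) = Cadd (csum f n) (f n).
Proof.
  unfold csum. rewrite seq_S, map_app, fold_right_app. simpl.
  generalize (map f (seq 0 n)). induction l; simpl; [ring|]. rewrite IHl; ring.
Qed.

Lemma csum_first f n : csum f (S n) = Cadd (f 0%nat) (csum (fun k => f (S k)) n).
Proof. unfold csum. simpl. f_equal. rewrite <- seq_shift, map_map. reflexivity. Qed.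

Lemma csum_ext f g n : (forall k, (k < n)%nat -> f k = g k) -> csum f n = csum g n.
Proof. induction n; intro H; [reflexivity|]. rewrite !csum_last, IHn, H; auto. Qed.

Lemma csum_add f g n : csum (fun k => Cadd (f k) (g k)) n = Cadd (csum f n) (csum g n).
Proof. induction n; [unfold csum; simpl; ring|]. rewrite !csum_last, IHn; ring. Qed.

Lemma csum_scale c f n : csum (fun k => Cmul c (f k)) n = Cmul c (csum f n).
Proof. induction n; [unfold csum; simpl; ring|]. rewrite !csum_last, IHn; ring. Qed.

(* Pascal's triangle; unlike [Binomial.C n k] it vanishes for [k > n], so
   Pascal's rule holds for all [k]. *)
Fixpoint pascal (n k : nat) : nat :=
  match n, k with
  | _, O => 1%nat
  | O, S _ => 0%nat
  | S n', S k' => (pascal n' k' + pascal n' (S k'))%nat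
  end.

Lemma pascal_gt n k : (n < k)%nat -> pascal n k = 0%nat.
Proof.
  revert k; induction n; intros k H; destruct k; simpl; try lia; auto.
  rewrite !IHn; lia.
Qed.

Lemma pascal_n0 n : pascal n 0 = 1%nat.
Proof. destruct n; reflexivity. Qed.

Lemma pascal_nn n : pascal n n = 1%nat.
Proof. induction n; simpl; auto. rewrite IHn, pascal_gt; lia. Qed.

Lemma binomial_C_pascal n k : (k <= n)%nat -> Binomial.C n k = INR (pascal n k).
Proof.
  revert k; induction n; intros k H.
  - destruct k; [|lia]. rewrite Rcomplements.C_n_0; reflexivity.
  - destruct k; [rewrite Rcomplements.C_n_0; reflexivity|].
    destruct (Nat.eq_dec k n) as [->|Hk].
    + rewrite Rcomplements.C_n_n, pascal_nn; reflexivity.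
    + rewrite <- Binomial.pascal by lia. simpl pascal. rewrite plus_INR, <- !IHn by lia.
      reflexivity.
Qed.

Definition binom_term (x y : Cplx) (n k : nat) : Cplx :=
  Cmul (RtoC ((-1) ^ k * INR (pascal n k))) (Cmul (Cpow x (n - k)) (Cpow y k)).

Lemma RtoC_add r s : RtoC (r + s) = Cadd (RtoC r) (RtoC s).
Proof. unfold RtoC, Cadd; simpl; f_equal; ring. Qed.

Lemma RtoC_mul r s : RtoC (r * s) = Cmul (RtoC r) (RtoC s).
Proof. unfold RtoC, Cmul; simpl; f_equal; ring. Qed.

Lemma RtoC_m1 : RtoC (-1) = Copp Defs.C1.
Proof. unfold RtoC, Copp, Defs.C1; simpl; f_equal; ring. Qed.

Lemma binom_term_succ x y n k :
  binom_term x y (S n) (S k) = Cadd (Cmul x (binom_term x y n (S k))) (Cmul (Copp y) (binom_term x y n k)).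
Proof.
  unfold binom_term. simpl pascal. simpl pow. rewrite plus_INR.
  replace (S n - S k)%nat with (n - k)%nat by lia.
  destruct (Nat.lt_ge_cases k n).
  - replace (n - k)%nat with (S (n - S k)) by lia. simpl Cpow.
    rewrite !RtoC_mul, RtoC_add, RtoC_m1. ring.
  - rewrite (pascal_gt n (S k)) by lia.
    replace (n - S k)%nat with 0%nat by lia.
    destruct (Nat.eq_dec k n) as [->|Hk]; [|rewrite (pascal_gt n k) by lia].
    + rewrite Nat.sub_diag. simpl Cpow. rewrite !RtoC_mul, RtoC_add, RtoC_m1.
      change (RtoC (INR 0)) with C0. ring.
    + replace (n - k)%nat with 0%nat by lia. simpl Cpow.
      rewrite !RtoC_mul, RtoC_add, RtoC_m1.
      change (RtoC (INR 0)) with C0. ring.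
Qed.

Lemma binomial_sub x y n : csum (binom_term x y n) (S n) = Cpow (Csub x y) n.
Proof.
  induction n.
  - unfold csum, binom_term; simpl. unfold RtoC, C0, Cadd, Cmul, Defs.C1; simpl; f_equal; ring.
  - rewrite csum_first.
    rewrite (csum_ext _ (fun k => Cadd (Cmul x (binom_term x y n (S k))) (Cmul (Copp y) (binom_term x y n k))))
      by (intros; apply binom_term_succ).
    rewrite csum_add, !csum_scale.
    assert (Hsplit : csum (binom_term x y n) (S (S n))
                     = Cadd (binom_term x y n 0) (csum (fun k => binom_term x y n (S k)) (S n)))
      by apply csum_first.
    assert (Htop : binom_term x y n (S n) = C0).
    { unfold binom_term. rewrite pascal_gt by lia. change (RtoC ((-1) ^ S n * INR 0)) with (RtoC ((-1) ^ S n * 0)).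
      rewrite Rmult_0_r. change (RtoC 0) with C0. ring. }
    assert (Hbot : binom_term x y (S n) 0 = Cmul x (binom_term x y n 0)).
    { unfold binom_term. rewrite !pascal_n0, !Nat.sub_0_r. simpl Cpow. ring. }
    rewrite csum_last, Htop in Hsplit.
    rewrite Hbot. simpl Cpow. rewrite <- IHn.
    replace (csum (fun k => binom_term x y n (S k)) (S n)) with
      (Csub (Cadd (csum (binom_term x y n) (S n)) C0) (binom_term x y n 0)) by (rewrite Hsplit; ring).
    ring.
Qed.

(** * Compressions by approximate eigenvectors *)

Section Compression.

Context {A : CstarAlg}.
Implicit Types x y c w z : A.
Variable e : A -> R.

(* [approx_eig x xi]: [x z = xi z + O(e z)] and [approx_compr w s]:
   [z* w z = s z* z + O(e z)], uniformly on the unit ball. *)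
Definition approx_eig x (xi : Cplx) : Prop :=
  exists K, 0 <= K /\ forall z, norm z <= 1 ->
    norm (sub (mul x z) (smul xi z)) <= K * e z.

Definition approx_compr w (s : Cplx) : Prop :=
  exists K, 0 <= K /\ forall z, norm z <= 1 ->
    norm (sub (mul (mul (star z) w) z) (smul s (mul (star z) z))) <= K * e z.

Lemma approx_eig_pow x xi n : approx_eig x xi -> approx_eig (apow x n) (Cpow xi n).
Proof.
  intros [Kx [HKx Hx]]. induction n as [|n [K [HK IH]]].
  - exists 0. split; [lra|]. intros z _. simpl. rewrite mul1x, smul1, addN, norm_zero. lra.
  - pose proof (norm_ge0 x). pose proof (Cabs_ge0 (Cpow xi n)).
    exists (norm x * K + Cabs (Cpow xi n) * Kx). split; [nra|].
    intros z Hz. simpl.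
    eapply Rle_trans; [apply (norm_sub_tri _ (mul x (smul (Cpow xi n) z)))|].
    rewrite <- mulA, <- mul_subr, <- smul_mulr.
    replace (Cmul xi (Cpow xi n)) with (Cmul (Cpow xi n) xi) by ring.
    rewrite smulM, <- smul_sub, normZ.
    specialize (IH z Hz); specialize (Hx z Hz).
    pose proof (normM x (sub (mul (apow x n) z) (smul (Cpow xi n) z))).
    nra.
Qed.

Lemma approx_eig_inv x y xi : mul y x = one -> xi <> C0 ->
  approx_eig x xi -> approx_eig y (Complex.Cinv xi).
Proof.
  intros Hyx Hxi [Kx [HKx Hx]].
  pose proof (Cabs_ge0 (Complex.Cinv xi)). pose proof (norm_ge0 y).
  exists (Cabs (Complex.Cinv xi) * norm y * Kx).
  split; [repeat apply Rmult_le_pos; assumption|]. intros z Hz.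
  replace (sub (mul y z) (smul (Complex.Cinv xi) z)) with
    (smul (Copp (Complex.Cinv xi)) (mul y (sub (mul x z) (smul xi z)))).
  - rewrite normZ, Cabs_opp, !Rmult_assoc. apply Rmult_le_compat_l; [assumption|].
    eapply Rle_trans; [apply normM|]. apply Rmult_le_compat_l; auto.
  - rewrite mul_subr, mulA, Hyx, mul1x, <- smul_mulr, smul_sub, <- smulM.
    replace (Cmul (Copp (Complex.Cinv xi)) xi) with (Copp Defs.C1)
      by (rewrite <- (Complex.Cinv_l xi Hxi : Cmul (Complex.Cinv xi) xi = Defs.C1); ring).
    rewrite !smul_oppc, smul1, oppK, addC. reflexivity.
Qed.

Lemma approx_compr_star_mul x y xi eta : approx_eig x xi -> approx_eig y eta ->
  approx_compr (mul (star x) y) (Cmul (Cconj xi) eta).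
Proof.
  intros [Kx [HKx Hx]] [Ky [HKy Hy]].
  pose proof (norm_ge0 y). pose proof (Cabs_ge0 xi).
  exists (Kx * norm y + Cabs xi * Ky). split; [nra|]. intros z Hz.
  pose proof (norm_ge0 z).
  replace (mul (mul (star z) (mul (star x) y)) z) with (mul (star (mul x z)) (mul y z))
    by (rewrite starM, !mulA; reflexivity).
  replace (smul (Cmul (Cconj xi) eta) (mul (star z) z)) with (mul (star (smul xi z)) (smul eta z))
    by (rewrite starZ, <- smul_mull, <- smul_mulr, smulM; reflexivity).
  eapply Rle_trans; [apply (norm_sub_tri _ (mul (star (smul xi z)) (mul y z)))|].
  rewrite <- mul_subl, <- star_sub, <- mul_subr.
  specialize (Hx z Hz); specialize (Hy z Hz).
  assert (Hyz : norm (mul y z) <= norm y) by (eapply Rle_trans; [apply normM|]; nra).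
  assert (Hxz : norm (star (smul xi z)) <= Cabs xi) by (rewrite norm_star, normZ; nra).
  assert (Hleft : norm (mul (star (sub (mul x z) (smul xi z))) (mul y z)) <= Kx * e z * norm y).
  { eapply Rle_trans; [apply normM|]. rewrite norm_star.
    apply Rmult_le_compat; auto using norm_ge0. }
  assert (Hright : norm (mul (star (smul xi z)) (sub (mul y z) (smul eta z))) <= Cabs xi * (Ky * e z)).
  { eapply Rle_trans; [apply normM|]. apply Rmult_le_compat; auto using norm_ge0. }
  lra.
Qed.

Lemma approx_compr_add w1 w2 s1 s2 :
  approx_compr w1 s1 -> approx_compr w2 s2 -> approx_compr (add w1 w2) (Cadd s1 s2).
Proof.
  intros [K1 [HK1 H1]] [K2 [HK2 H2]]. exists (K1 + K2). split; [lra|]. intros z Hz.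
  replace (sub (mul (mul (star z) (add w1 w2)) z) (smul (Cadd s1 s2) (mul (star z) z)))
    with (add (sub (mul (mul (star z) w1) z) (smul s1 (mul (star z) z)))
              (sub (mul (mul (star z) w2) z) (smul s2 (mul (star z) z)))).
  - eapply Rle_trans; [apply norm_triangle|]. specialize (H1 z Hz); specialize (H2 z Hz). lra.
  - rewrite mulDr, mulDl, smulDs, opp_add, <- !addA. f_equal. apply addCA.
Qed.

Lemma approx_compr_smul w s r : approx_compr w s -> approx_compr (smul r w) (Cmul r s).
Proof.
  intros [K [HK H]]. pose proof (Cabs_ge0 r). exists (Cabs r * K). split; [nra|]. intros z Hz.
  rewrite <- smul_mulr, <- smul_mull, smulM, <- smul_sub, normZ, Rmult_assoc.
  apply Rmult_le_compat_l; auto.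
Qed.

Lemma approx_compr_fold (f : nat -> A) (g : nat -> Cplx) l :
  (forall k, approx_compr (f k) (g k)) ->
  approx_compr (fold_right add zero (map f l)) (fold_right Cadd C0 (map g l)).
Proof.
  intro H. induction l as [|k l IH]; simpl; [|apply approx_compr_add; auto].
  exists 0. split; [lra|]. intros z _.
  rewrite mulx0, mul0x, smul0, addN, norm_zero. lra.
Qed.

Lemma approx_compr_norm_le w s :
  (forall d, 0 < d -> exists z, norm z = 1 /\ e z <= d) -> approx_compr w s -> Cabs s <= norm w.
Proof.
  intros Hsmall [K [HK H]]. apply Rle_plus_epsilon. intros eps Heps.
  destruct (Hsmall (eps / (K + 1))) as [z [Hz Hez]]; [apply Rdiv_lt_0_compat; lra|].
  specialize (H z (Req_le _ _ Hz)).
  assert (Hs : norm (smul s (mul (star z) z)) = Cabs s) by (rewrite normZ, cstar_id, Hz; ring).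
  assert (Hw : norm (mul (mul (star z) w) z) <= norm w).
  { eapply Rle_trans; [apply normM|]. rewrite Hz, Rmult_1_r.
    eapply Rle_trans; [apply normM|]. rewrite norm_star, Hz. lra. }
  assert (HKe : K * e z <= eps).
  { assert (Heps' : eps / (K + 1) * (K + 1) = eps) by (field; lra).
    pose proof (Rdiv_lt_0_compat eps (K + 1) Heps ltac:(lra)). nra. }
  pose proof (norm_le_sub (mul (mul (star z) w) z) (smul s (mul (star z) z))). lra.
Qed.

Lemma Cab_norm_lower x c xi gamma :
  (forall d, 0 < d -> exists z, norm z = 1 /\ e z <= d) ->
  approx_eig x xi -> approx_eig c gamma ->
  forall n, Cabs (Csub (Cconj xi) gamma) ^ n <= norm (Cab (star x) c n).
Proof.
  intros Hsmall Hx Hc n. rewrite <- Cabs_pow, <- binomial_sub.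
  apply approx_compr_norm_le; [exact Hsmall|].
  rewrite (csum_ext _ (fun k => Cmul (RtoC ((-1) ^ k * Binomial.C n k))
                                     (Cmul (Cconj (Cpow xi (n - k))) (Cpow gamma k)))).
  - apply approx_compr_fold. intro k. apply approx_compr_smul.
    rewrite star_apow. apply approx_compr_star_mul; apply approx_eig_pow; assumption.
  - intros k Hk. unfold binom_term. rewrite binomial_C_pascal, Cconj_pow by lia. reflexivity.
Qed.

End Compression.

(** * Lower bounds for [rho] and the spectrum *)

Lemma nroot_ge x D n : 0 <= D -> (0 < n)%nat -> D ^ n <= x -> D <= nroot x n.
Proof.
  intros HD Hn Hx. unfold nroot.
  destruct HD as [HD|<-]; destruct (Rle_dec x 0) as [Hx0|Hx0].
  - pose proof (pow_lt D n HD). lra.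
  - replace D with (Rpower (D ^ n) (/ INR n)) at 1.
    + apply Rle_Rpower_l; [left; apply Rinv_0_lt_compat, lt_0_INR; exact Hn|].
      split; [apply pow_lt|]; assumption.
    + rewrite <- Rpower_pow, Rpower_mult, Rinv_r, Rpower_1 by (auto; apply not_0_INR; lia).
      reflexivity.
  - lra.
  - left. apply exp_pos.
Qed.

Lemma rho_ge {A : CstarAlg} (b c : A) L D :
  0 <= D -> (forall n, D ^ n <= norm (Cab b c n)) -> rho_eq b c L -> D <= L.
Proof.
  intros HD Hn [Hup _]. apply Rle_plus_epsilon. intros eps Heps.
  destruct (Hup eps Heps) as [N HN]. specialize (HN (S N) (Nat.le_succ_diag_r N)).
  pose proof (nroot_ge _ D (S N) HD (Nat.lt_0_succ N) (Hn (S N))). lra.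
Qed.

Lemma approx_eigenvalue_rho_ge {A : CstarAlg} (a c : A) mu gamma L :
  approx_eigenvalue a mu ->
  approx_eig (fun z => norm (sub (mul a z) (smul mu z))) c gamma ->
  rho_eq (star a) c L -> Cabs (Csub (Cconj mu) gamma) <= L.
Proof.
  intros Hmu Hc. apply rho_ge; [apply Cabs_ge0|].
  apply (Cab_norm_lower (fun z => norm (sub (mul a z) (smul mu z)))); [exact Hmu| |exact Hc].
  exists 1. split; [lra|]. intros z _. lra.
Qed.

Lemma approx_eigenvalue_real {A : CstarAlg} (a : A) mu :
  rho_eq (star a) a 0 -> approx_eigenvalue a mu -> snd mu = 0.
Proof.
  intros Hrho Hmu.
  assert (Hc : approx_eig (fun z => norm (sub (mul a z) (smul mu z))) a mu)
    by (exists 1; split; [lra|]; intros z _; lra).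
  pose proof (Cabs_le0 _ (approx_eigenvalue_rho_ge a a mu mu 0 Hmu Hc Hrho)) as E.
  apply (f_equal snd) in E. unfold Csub, Cadd, Copp, Cconj, C0 in E. simpl in E. lra.
Qed.

Lemma approx_eigenvalue_unimodular {A : CstarAlg} (a ainv : A) mu :
  mul ainv a = one -> rho_eq (star a) ainv 0 -> mu <> C0 ->
  approx_eigenvalue a mu -> Cabs mu = 1.
Proof.
  intros Hinv Hrho Hmu0 Hmu.
  assert (Hc : approx_eig (fun z => norm (sub (mul a z) (smul mu z))) ainv (Complex.Cinv mu)).
  { apply (approx_eig_inv _ a); [exact Hinv|exact Hmu0|].
    exists 1; split; [lra|]; intros z _; lra. }
  pose proof (Cabs_le0 _ (approx_eigenvalue_rho_ge a ainv mu _ 0 Hmu Hc Hrho)) as E.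
  apply Cabs_eq1_of_conj_inv; [exact Hmu0|].
  replace (Cconj mu) with (Cadd (Csub (Cconj mu) (Complex.Cinv mu)) (Complex.Cinv mu)) by ring.
  rewrite E. ring.
Qed.

Lemma spectrum_real {A : CstarAlg} (a : A) l :
  rho_eq (star a) a 0 -> in_spectrum a l -> snd l = 0.
Proof.
  intros Hrho Hl. destruct l as [p q]. simpl. apply NNPP. intro Hq.
  assert (Hg : forall t, Cline (p, 0) (0, q) t = (p, t * q))
    by (intro; unfold Cline, Cadd, Cmul, RtoC; simpl; f_equal; ring).
  pose proof (Rabs_pos_lt q Hq). pose proof (norm_ge0 a).
  set (T := (norm a + 1) / Rabs q + 1).
  assert (HT : (norm a + 1) / Rabs q * Rabs q = norm a + 1) by (field; lra).
  assert (HT0 : 0 <= (norm a + 1) / Rabs q) by (apply Rmult_le_pos; [lra|left; apply Rinv_0_lt_compat; lra]).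
  destruct (approx_eigenvalue_on_line a (p, 0) (0, q) 1 T) as [t0 [Ht0 [_ Hmu]]].
  - unfold T; lra.
  - rewrite Hg, Rmult_1_l. exact Hl.
  - apply resolvent_large. rewrite Hg. eapply Rlt_le_trans; [|apply Rabs_snd_le_Cabs].
    simpl. rewrite Rabs_mult, (Rabs_right T) by (unfold T; lra).
    unfold T. rewrite Rmult_plus_distr_r, HT. lra.
  - apply approx_eigenvalue_real in Hmu; [|exact Hrho].
    rewrite Hg in Hmu. simpl in Hmu. apply Rmult_integral in Hmu. lra.
Qed.

Lemma spectrum_unimodular {A : CstarAlg} (a ainv : A) l :
  mul a ainv = one -> mul ainv a = one -> rho_eq (star a) ainv 0 ->
  in_spectrum a l -> Cabs l = 1.
Proof.
  intros H1 H2 Hrho Hl.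
  assert (Hcirc : forall mu, ~ resolvent a mu -> approx_eigenvalue a mu -> Cabs mu = 1).
  { intros mu Hsp Happ. apply (approx_eigenvalue_unimodular a ainv); auto.
    intro E. rewrite E in Hsp. exact (Hsp (resolvent0 a ainv H1 H2)). }
  apply NNPP. intro Hne. pose proof (Cabs_ge0 l). pose proof (norm_ge0 a).
  assert (Habs : forall r, 0 <= r -> Cabs (Cmul (RtoC r) l) = r * Cabs l)
    by (intros; rewrite Cabs_mul, Cabs_RtoC, Rabs_right by lra; reflexivity).
  assert (H1l : Cmul (RtoC 1) l = l) by (change (RtoC 1) with Defs.C1; ring).
  destruct (Rlt_or_le 1 (Cabs l)) as [Hgt|Hle].
  - assert (Hg : forall t, Cline C0 l t = Cmul (RtoC t) l) by (intro; unfold Cline; ring).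
    destruct (approx_eigenvalue_on_line a C0 l 1 (norm a + 1)) as [t0 [Ht0 [Hsp Happ]]].
    + lra.
    + rewrite Hg, H1l. exact Hl.
    + apply resolvent_large. rewrite Hg, Habs by lra. nra.
    + apply Hcirc in Happ; [|exact Hsp]. rewrite Hg, Habs in Happ by lra. nra.
  - assert (Hg : forall t, Cline l (Copp l) t = Cmul (RtoC (1 - t)) l)
      by (intro; destruct l; unfold Cline, Cadd, Cmul, Copp, RtoC; simpl; f_equal; ring).
    assert (Hlt : Cabs l < 1) by (destruct Hle; [assumption|contradiction]).
    destruct (approx_eigenvalue_on_line a l (Copp l) 0 1) as [t0 [Ht0 [Hsp Happ]]].
    + lra.
    + rewrite Hg, Rminus_0_r, H1l. exact Hl.
    + rewrite Hg, Rminus_diag. change (RtoC 0) with C0.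
      replace (Cmul C0 l) with C0 by ring. exact (resolvent0 a ainv H1 H2).
    + apply Hcirc in Happ; [|exact Hsp]. rewrite Hg, Habs in Happ by lra. nra.
Qed.

Theorem theorem3p5 (A : CstarAlg) (a : A) :
  (rho_eq (star a) a 0 -> forall l, in_spectrum a l -> snd l = 0) /\
  (forall ainv : A, mul a ainv = one -> mul ainv a = one ->
     rho_eq (star a) ainv 0 -> forall l, in_spectrum a l -> Cabs l = 1).
Proof.
  split.
  - intros Hrho l. exact (spectrum_real a l Hrho).
  - intros ainv H1 H2 Hrho l. exact (spectrum_unimodular a ainv l H1 H2 Hrho).
Qed.
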